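(* Let $S$ be a semigroup, let $a\in S$, and define $$P=\{x\in Sa: x\,\mathscr L\, ax\},\quad P'=\{x\in Sa: x\,\mathscr J\, ax\},\quad P''=\{x\in S: x\in xSa\},\quad P'''=\{x\in S: x\in S^1xSa\}.$$ For $x\in Sa$, write $K_x$ for the $\mathscr K$-class of $x$ in $S$ and $K^a_x$ for the $\mathscr K$-class of $x$ in the semigroup $Sa$, for $\mathscr K\in\{\mathscr L,\mathscr R,\mathscr H,\mathscr D,\mathscr J\}$. Then for every $x\in Sa$: (i) $L^a_x=L_x\cap P$ if $x\in P$, and $L^a_x=\{x\}$ if $x\notin P$; (ii) $R^a_x=R_x\cap P''$ if $x\in P''$, and $R^a_x=\{x\}$ if $x\notin P''$; (iii) $H^a_x=H_x$ if $x\in P\cap P''$, and $H^a_x=\{x\}$ if $x\notin P\cap P''$; (iv) $D^a_x=D_x\cap P\cap P''$ if $x\in P\cap P''$; $D^a_x=R^a_x$ if $x\notin P$; and $D^a_x=L^a_x$ if $x\notin P''$; (v) $J^a_x=J_x\cap P'\cap P'''$ if $x\in P'\cap P'''$, and $J^a_x=D^a_x$ if $x\notin P'\cap P'''$.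
   Context: $Sa=\{xa:x\in S\}$. $S^1$ denotes $S$ with an identity adjoined if $S$ is not a monoid. Green's relations on a semigroup $T$: $x\,\mathscr L\,y$ iff $T^1x=T^1y$; $x\,\mathscr R\,y$ iff $xT^1=yT^1$; $x\,\mathscr J\,y$ iff $T^1xT^1=T^1yT^1$; $\mathscr H=\mathscr L\cap\mathscr R$; $\mathscr D=\mathscr L\vee\mathscr R=\mathscr L\circ\mathscr R$. The relations on $S$ and on $Sa$ are computed in the respective semigroups. *)

Section Green.
Variable S : Type.
Variable mul : S -> S -> S.

(* Elements of T^1 for a subsemigroup T (given as a predicate): None is the
   adjoined identity, Some t with T t. *)
Definition in1 (T : S -> Prop) (u : option S) : Prop :=
  match u with None => True | Some t => T t end.
Definition lmul1 (u : option S) (x : S) : S :=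
  match u with None => x | Some t => mul t x end.
Definition rmul1 (x : S) (u : option S) : S :=
  match u with None => x | Some t => mul x t end.

Definition inT1l (T : S -> Prop) (x y : S) : Prop :=
  exists u, in1 T u /\ x = lmul1 u y.
Definition inT1r (T : S -> Prop) (x y : S) : Prop :=
  exists u, in1 T u /\ x = rmul1 y u.
Definition inT1lr (T : S -> Prop) (x y : S) : Prop :=
  exists u v, in1 T u /\ in1 T v /\ x = rmul1 (lmul1 u y) v.

(* Green's relations computed in the subsemigroup T (for T = whole S,
   use T := fun _ => True). *)
Definition GL (T : S -> Prop) (x y : S) : Prop := inT1l T x y /\ inT1l T y x.
Definition GR (T : S -> Prop) (x y : S) : Prop := inT1r T x y /\ inT1r T y x.
Definition GH (T : S -> Prop) (x y : S) : Prop := GL T x y /\ GR T x y.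
Definition GD (T : S -> Prop) (x y : S) : Prop :=
  exists z, T z /\ GL T x z /\ GR T z y.
Definition GJ (T : S -> Prop) (x y : S) : Prop := inT1lr T x y /\ inT1lr T y x.

Definition full : S -> Prop := fun _ => True.

Definition Sa (a : S) : S -> Prop := fun x => exists s, x = mul s a.

Definition PP (a : S) (x : S) : Prop := Sa a x /\ GL full x (mul a x).
Definition PP' (a : S) (x : S) : Prop := Sa a x /\ GJ full x (mul a x).
Definition PP'' (a : S) (x : S) : Prop := exists s, x = mul (mul x s) a.
Definition PP''' (a : S) (x : S) : Prop :=
  exists u s, in1 full u /\ x = lmul1 u (mul (mul x s) a).

End Green.

Arguments in1 {S} T u.
Arguments lmul1 {S} mul u x.
Arguments rmul1 {S} mul x u.
Arguments inT1l {S} mul T x y.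
Arguments inT1r {S} mul T x y.
Arguments inT1lr {S} mul T x y.
Arguments GL {S} mul T x y.
Arguments GR {S} mul T x y.
Arguments GH {S} mul T x y.
Arguments GD {S} mul T x y.
Arguments GJ {S} mul T x y.
Arguments Sa {S} mul a x.
Arguments PP {S} mul a x.
Arguments PP' {S} mul a x.
Arguments PP'' {S} mul a x.
Arguments PP''' {S} mul a x.

From Stdlib Require Import Setoid.

Set Implicit Arguments.
Unset Strict Implicit.

(* Everything holds for an arbitrary left ideal T of S, not only for T = Sa.
   If x and y are Green-related in T by multipliers that are not both the
   adjoined identity, composing them exhibits x in Tx (for L), in xT (for R)
   or in TxT (for J); otherwise x = y, or, for J, x and y are already L- or
   R-related.  Conversely, for elements of Tx (resp. xT, TxT) the multipliers
   from S^1 witnessing a Green relation in S can be absorbed into T, because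
   (S^1)T is contained in T.  The sets P, P'' and P' /\ P''' are exactly the
   elements of T lying in Tx, in xT and in TxT. *)

Section LeftIdeal.

Variable S : Type.
Variable mul : S -> S -> S.
Hypothesis assoc : forall x y z, mul x (mul y z) = mul (mul x y) z.
Variable T : S -> Prop.
Hypothesis T_lmul : forall s t, T t -> T (mul s t).

Local Notation lm := (lmul1 mul).
Local Notation rm := (rmul1 mul).
Local Notation full := (full S).

Local Ltac assoc_norm := simpl; rewrite ?assoc; reflexivity.

Definition mul1 (u v : option S) : option S :=
  match u, v with
  | None, _ => v
  | Some p, None => Some p
  | Some p, Some q => Some (mul p q)
  end.

Lemma mul1_None u v : mul1 u v = None -> u = None /\ v = None.
Proof. destruct u, v; simpl; try discriminate; auto. Qed.

Lemma in1_mul1 u v : in1 T u -> in1 T v -> in1 T (mul1 u v).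
Proof. destruct u, v; simpl; auto. Qed.

Lemma in1_full u : in1 full u.
Proof. destruct u; exact I. Qed.

Lemma lmul1_rmul1 u x v : lm u (rm x v) = rm (lm u x) v.
Proof. destruct u, v; assoc_norm. Qed.

Lemma lmul1_rmul1_mul1 u u' x v' v :
  rm (lm u (rm (lm u' x) v')) v = rm (lm (mul1 u u') x) (mul1 v' v).
Proof. destruct u, u', v, v'; assoc_norm. Qed.

Lemma T_lmul1 u t : T t -> T (lm u t).
Proof. destruct u; simpl; auto. Qed.

Lemma T_rmul1 t v : T t -> in1 T v -> T (rm t v).
Proof. destruct v; simpl; auto. Qed.

Definition in_Tx (x : S) : Prop := exists t, T t /\ x = mul t x.
Definition in_xT (x : S) : Prop := exists t, T t /\ x = mul x t.
Definition in_TxT (x : S) : Prop :=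
  exists t t', T t /\ T t' /\ x = mul (mul t x) t'.

Lemma in_xT_T x : in_xT x -> T x.
Proof. intros [t [Tt ->]]; auto. Qed.

Lemma in_TxT_T x : in_TxT x -> T x.
Proof. intros [t [t' [_ [Tt' ->]]]]; auto. Qed.

Lemma in_Tx_rmul1 x v : in_Tx x -> in_Tx (rm x v).
Proof.
  intros [t [Tt ex]]; exists t; split; [exact Tt|].
  transitivity (rm (mul t x) v); [rewrite <- ex; reflexivity | destruct v; assoc_norm].
Qed.

Lemma in_xT_lmul1 u x : in_xT x -> in_xT (lm u x).
Proof.
  intros [t [Tt ex]]; exists t; split; [exact Tt|].
  transitivity (lm u (mul x t)); [rewrite <- ex; reflexivity | destruct u; assoc_norm].
Qed.

Lemma GL_refl x : GL mul T x x.
Proof. split; exists None; simpl; auto. Qed.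

Lemma GR_refl x : GR mul T x x.
Proof. split; exists None; simpl; auto. Qed.

Lemma GL_full x y : GL mul T x y -> GL mul full x y.
Proof.
  intros [[u [_ e1]] [v [_ e2]]]; split; [exists u | exists v]; auto using in1_full.
Qed.

Lemma GR_full x y : GR mul T x y -> GR mul full x y.
Proof.
  intros [[u [_ e1]] [v [_ e2]]]; split; [exists u | exists v]; auto using in1_full.
Qed.

Lemma GJ_full x y : GJ mul T x y -> GJ mul full x y.
Proof.
  intros [[u [v [_ [_ e1]]]] [u' [v' [_ [_ e2]]]]].
  split; [exists u, v | exists u', v']; auto using in1_full.
Qed.

Lemma GL_eq_or_in_Tx x y : GL mul T x y -> y = x \/ in_Tx x.
Proof.
  intros [[[p|] [Hp e1]] [[q|] [Hq e2]]]; simpl in *; auto.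
  right; exists (mul p q); split; [auto|].
  rewrite <- assoc, <- e2; exact e1.
Qed.

Lemma GR_eq_or_in_xT x y : GR mul T x y -> y = x \/ in_xT x.
Proof.
  intros [[[p|] [Hp e1]] [[q|] [Hq e2]]]; simpl in *; auto.
  right; exists (mul q p); split; [auto|].
  rewrite assoc, <- e2; exact e1.
Qed.

Lemma in_Tx_GL x y : in_Tx x -> GL mul T x y -> in_Tx y.
Proof.
  intros [t [Tt ex]] [[u [Hu e1]] [v [Hv e2]]].
  exists (lm v (rm t u)); split; [auto using T_lmul1, T_rmul1|].
  transitivity (lm v (mul t (lm u y))); [rewrite <- e1, <- ex; exact e2|].
  destruct u, v; assoc_norm.
Qed.

Lemma in_xT_GR x y : in_xT x -> GR mul T x y -> in_xT y.
Proof.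
  intros [t [Tt ex]] [[u [Hu e1]] [v [Hv e2]]].
  exists (rm (lm u t) v); split; [auto using T_lmul1, T_rmul1|].
  transitivity (rm (mul (rm y u) t) v); [rewrite <- e1, <- ex; exact e2|].
  destruct u, v; assoc_norm.
Qed.

Lemma in_TxT_GJ x y : in_TxT x -> GJ mul T x y -> in_TxT y.
Proof.
  intros [t [t' [Tt [Tt' ex]]]] [[u [v [Hu [Hv e1]]]] [u' [v' [Hu' [Hv' e2]]]]].
  exists (rm (lm u' t) u), (rm (lm v t') v').
  split; [auto using T_lmul1, T_rmul1|split; [auto using T_lmul1, T_rmul1|]].
  transitivity (rm (lm u' (mul (mul t (rm (lm u y) v)) t')) v');
    [rewrite <- e1, <- ex; exact e2|].
  destruct u, u', v, v'; assoc_norm.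
Qed.

Lemma GL_of_full x y : in_Tx x -> in_Tx y -> GL mul full x y -> GL mul T x y.
Proof.
  intros [t [Tt ex]] [t' [Tt' ey]] [[u [_ e1]] [v [_ e2]]]; split.
  - exists (Some (lm u t')); split; [apply T_lmul1; exact Tt'|].
    transitivity (lm u (mul t' y)); [rewrite <- ey; exact e1 | destruct u; assoc_norm].
  - exists (Some (lm v t)); split; [apply T_lmul1; exact Tt|].
    transitivity (lm v (mul t x)); [rewrite <- ex; exact e2 | destruct v; assoc_norm].
Qed.

Lemma GR_of_full x y : in_xT x -> in_xT y -> GR mul full x y -> GR mul T x y.
Proof.
  intros [t [Tt ex]] [t' [Tt' ey]] [[u [_ e1]] [v [_ e2]]]; split.
  - exists (Some (lm u t)); split; [apply T_lmul1; exact Tt|].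
    transitivity (mul (rm y u) t); [rewrite <- e1; exact ex | destruct u; assoc_norm].
  - exists (Some (lm v t')); split; [apply T_lmul1; exact Tt'|].
    transitivity (mul (rm x v) t'); [rewrite <- e2; exact ey | destruct v; assoc_norm].
Qed.

Lemma GJ_of_full x y : in_TxT x -> in_TxT y -> GJ mul full x y -> GJ mul T x y.
Proof.
  intros [t0 [t0' [Tt0 [Tt0' ex]]]] [t [t' [Tt [Tt' ey]]]]
    [[p [q [_ [_ e1]]]] [p' [q' [_ [_ e2]]]]]; split.
  - exists (Some (mul (rm t0 p) t)), (Some (mul (rm t' q) t0')).
    split; [simpl; auto|split; [simpl; auto|]].
    transitivity (mul (mul t0 (rm (lm p (mul (mul t y) t')) q)) t0');
      [rewrite <- ey, <- e1; exact ex|].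
    destruct p, q; assoc_norm.
  - exists (Some (mul (rm t p') t0)), (Some (mul (rm t0' q') t')).
    split; [simpl; auto|split; [simpl; auto|]].
    transitivity (mul (mul t (rm (lm p' (mul (mul t0 x) t0')) q')) t');
      [rewrite <- ex, <- e2; exact ey|].
    destruct p', q'; assoc_norm.
Qed.

Lemma GD_GJ x y : GD mul T x y -> GJ mul T x y.
Proof.
  intros [z [_ [[[u [Hu e1]] [u' [Hu' e2]]] [[v [Hv e3]] [v' [Hv' e4]]]]]].
  split; [exists u, v | exists u', v']; split; auto; split; auto.
  - rewrite e1, e3; apply lmul1_rmul1.
  - rewrite e4, e2; reflexivity.
Qed.

Lemma GJ_cases x y :
  GJ mul T x y -> GL mul T x y \/ GR mul T x y \/ in_TxT x.
Proof.
  intros [[u [v [Hu [Hv e1]]]] [u' [v' [Hu' [Hv' e2]]]]].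
  assert (ex : x = rm (lm (mul1 u u') x) (mul1 v' v))
    by (rewrite <- lmul1_rmul1_mul1, <- e2; exact e1).
  pose proof (in1_mul1 Hu Hu') as Huu'.
  pose proof (in1_mul1 Hv' Hv) as Hv'v.
  destruct (mul1 u u') as [t|] eqn:Eu; [destruct (mul1 v' v) as [t'|] eqn:Ev|].
  - right; right; exists t, t'; auto.
  - destruct (mul1_None Ev) as [-> ->]; left; split; [exists u | exists u']; auto.
  - destruct (mul1_None Eu) as [-> ->]; right; left; split; [exists v | exists v']; auto.
Qed.

Lemma L_class_in x : in_Tx x ->
  forall y, T y /\ GL mul T x y <-> GL mul full x y /\ (T y /\ in_Tx y).
Proof.
  intros Hx y; split.
  - intros [Ty HL]; eauto using GL_full, in_Tx_GL.
  - intros [HL [Ty Hy]]; eauto using GL_of_full.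
Qed.

Lemma L_class_out x : T x -> ~ in_Tx x ->
  forall y, T y /\ GL mul T x y <-> y = x.
Proof.
  intros Tx nHx y; split.
  - intros [_ HL]; destruct (GL_eq_or_in_Tx HL); tauto.
  - intros ->; auto using GL_refl.
Qed.

Lemma R_class_in x : in_xT x ->
  forall y, T y /\ GR mul T x y <-> GR mul full x y /\ in_xT y.
Proof.
  intros Hx y; split.
  - intros [Ty HR]; eauto using GR_full, in_xT_GR.
  - intros [HR Hy]; eauto using in_xT_T, GR_of_full.
Qed.

Lemma R_class_out x : T x -> ~ in_xT x ->
  forall y, T y /\ GR mul T x y <-> y = x.
Proof.
  intros Tx nHx y; split.
  - intros [_ HR]; destruct (GR_eq_or_in_xT HR); tauto.
  - intros ->; auto using GR_refl.
Qed.

Lemma H_class_in x : in_Tx x -> in_xT x ->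
  forall y, T y /\ GH mul T x y <-> GH mul full x y.
Proof.
  intros Hx Hx' y; split.
  - intros [_ [HL HR]]; split; auto using GL_full, GR_full.
  - intros [HL HR].
    assert (Hy : in_Tx y)
      by (destruct HR as [_ [v [_ ->]]]; auto using in_Tx_rmul1).
    assert (Hy' : in_xT y)
      by (destruct HL as [_ [u [_ ->]]]; auto using in_xT_lmul1).
    split; [auto using in_xT_T|split; auto using GL_of_full, GR_of_full].
Qed.

Lemma H_class_out x : T x -> ~ (in_Tx x /\ in_xT x) ->
  forall y, T y /\ GH mul T x y <-> y = x.
Proof.
  intros Tx nHx y; split.
  - intros [_ [HL HR]].
    destruct (GL_eq_or_in_Tx HL), (GR_eq_or_in_xT HR); tauto.
  - intros ->; split; [exact Tx|split; auto using GL_refl, GR_refl].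
Qed.

Lemma D_class_in x : in_Tx x -> in_xT x ->
  forall y, T y /\ GD mul T x y <->
            GD mul full x y /\ (T y /\ in_Tx y) /\ in_xT y.
Proof.
  intros Hx Hx' y; split.
  - intros [Ty [z [Tz [HL HR]]]].
    assert (Hz : in_Tx z) by eauto using in_Tx_GL.
    assert (Hz' : in_xT z)
      by (destruct HL as [_ [u [_ ->]]]; auto using in_xT_lmul1).
    split; [exists z; split; [exact I|]; auto using GL_full, GR_full|].
    split; [split; [exact Ty|]|eauto using in_xT_GR].
    destruct HR as [_ [v [_ ->]]]; auto using in_Tx_rmul1.
  - intros [[z [_ [HL HR]]] [[Ty Hy] Hy']].
    assert (Hz' : in_xT z)
      by (destruct HL as [_ [u [_ ->]]]; auto using in_xT_lmul1).
    assert (Hz : in_Tx z)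
      by (destruct HR as [[v [_ ->]] _]; auto using in_Tx_rmul1).
    split; [exact Ty|].
    exists z; split; [auto using in_xT_T|].
    split; [apply GL_of_full | apply GR_of_full]; auto.
Qed.

Lemma D_class_out_l x : T x -> ~ in_Tx x ->
  forall y, T y /\ GD mul T x y <-> T y /\ GR mul T x y.
Proof.
  intros Tx nHx y; split.
  - intros [Ty [z [_ [HL HR]]]].
    destruct (GL_eq_or_in_Tx HL) as [->|]; tauto.
  - intros [Ty HR]; split; [exact Ty|].
    exists x; auto using GL_refl.
Qed.

Lemma D_class_out_r x : ~ in_xT x ->
  forall y, T y /\ GD mul T x y <-> T y /\ GL mul T x y.
Proof.
  intros nHx y; split.
  - intros [Ty [z [_ [HL HR]]]].
    destruct (GR_eq_or_in_xT HR) as [->|Hz]; [tauto|].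
    exfalso; apply nHx.
    destruct HL as [[u [_ ->]] _]; auto using in_xT_lmul1.
  - intros [Ty HL]; split; [exact Ty|].
    exists y; auto using GR_refl.
Qed.

Lemma J_class_in x : in_TxT x ->
  forall y, T y /\ GJ mul T x y <-> GJ mul full x y /\ in_TxT y.
Proof.
  intros Hx y; split.
  - intros [Ty HJ]; eauto using GJ_full, in_TxT_GJ.
  - intros [HJ Hy]; eauto using in_TxT_T, GJ_of_full.
Qed.

Lemma J_class_out x : T x -> ~ in_TxT x ->
  forall y, T y /\ GJ mul T x y <-> T y /\ GD mul T x y.
Proof.
  intros Tx nHx y; split.
  - intros [Ty HJ]; split; [exact Ty|].
    destruct (GJ_cases HJ) as [HL|[HR|Hx]]; [| |contradiction].
    + exists y; auto using GR_refl.
    + exists x; auto using GL_refl.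
  - intros [Ty HD]; auto using GD_GJ.
Qed.

End LeftIdeal.

Section Sa.

Variable S : Type.
Variable mul : S -> S -> S.
Hypothesis assoc : forall x y z, mul x (mul y z) = mul (mul x y) z.
Variable a : S.

Local Notation T := (Sa mul a).
Local Notation lm := (lmul1 mul).

Lemma Sa_lmul s t : T t -> T (mul s t).
Proof. intros [m ->]; exists (mul s m); apply assoc. Qed.

Lemma Sa_mul_lmul1 y u : T (mul y (lm u a)).
Proof. destruct u as [s|]; [exists (mul y s); apply assoc | exists y; reflexivity]. Qed.

Lemma PP_iff x : PP mul a x <-> T x /\ in_Tx mul T x.
Proof.
  split.
  - intros [Tx [[[s|] [_ e]] _]]; split; [exact Tx| |exact Tx|]; simpl in e.
    + exists (mul s a); split; [exists s; reflexivity|].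
      rewrite <- assoc; exact e.
    + (* x = a x gives x = (a a) x *)
      exists (mul a a); split; [exists a; reflexivity|].
      rewrite <- assoc, <- e; exact e.
  - intros [Tx [t [[s ->] e]]]; split; [exact Tx|split].
    + exists (Some s); split; [exact I|]; simpl; rewrite assoc; exact e.
    + exists (Some a); split; [exact I|reflexivity].
Qed.

Lemma PP''_iff x : PP'' mul a x <-> in_xT mul T x.
Proof.
  split.
  - intros [s e]; exists (mul s a); split; [exists s; reflexivity|].
    rewrite assoc; exact e.
  - intros [t [[s ->] e]]; exists s; rewrite <- assoc; exact e.
Qed.

Lemma PP'_PP'''_iff x : PP' mul a x /\ PP''' mul a x <-> in_TxT mul T x.
Proof.
  split.
  - intros [[_ [[u [v [_ [_ e1]]]] _]] [u2 [s [_ e2]]]].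
    set (w := lm (mul1 mul u2 u) a).
    set (r := lm v (mul s a)).
    assert (e3 : x = mul (mul w x) r).
    { transitivity (lm u2 (mul (mul (rmul1 mul (lm u (mul a x)) v) s) a));
        [rewrite <- e1; exact e2|].
      unfold w, r; destruct u2, u, v; simpl; rewrite ?assoc; reflexivity. }
    (* w need not lie in Sa (it may be a itself), but w w does *)
    exists (mul w w), (mul r r); split; [apply Sa_mul_lmul1|split].
    + apply Sa_lmul, (T_lmul1 Sa_lmul); exists s; reflexivity.
    + transitivity (mul (mul w (mul (mul w x) r)) r); [rewrite <- e3; exact e3|].
      rewrite ?assoc; reflexivity.
  - intros [t [t' [[s ->] [[s' ->] e]]]]; rewrite ?assoc in e; split.
    + split; [exists (mul (mul (mul s a) x) s'); rewrite ?assoc; exact e|split].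
      * exists (Some s), (Some (mul s' a)); split; [exact I|split; [exact I|]].
        simpl; rewrite ?assoc; exact e.
      * exists (Some a), None; split; [exact I|split; [exact I|reflexivity]].
    + exists (Some (mul s a)), s'; split; [exact I|].
      simpl; rewrite ?assoc; exact e.
Qed.

End Sa.

Theorem theorem3p8 (S : Type) (mul : S -> S -> S)
  (assoc : forall x y z, mul x (mul y z) = mul (mul x y) z) (a : S) :
  let T := Sa mul a in
  let P := PP mul a in
  let P' := PP' mul a in
  let P'' := PP'' mul a in
  let P''' := PP''' mul a in
  forall x, T x ->
  (* (i) *)
  ((P x -> forall y, (T y /\ GL mul T x y) <-> (GL mul (full S) x y /\ P y)) /\
   (~ P x -> forall y, (T y /\ GL mul T x y) <-> y = x)) /\
  (* (ii) *)
  ((P'' x -> forall y, (T y /\ GR mul T x y) <-> (GR mul (full S) x y /\ P'' y)) /\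
   (~ P'' x -> forall y, (T y /\ GR mul T x y) <-> y = x)) /\
  (* (iii) *)
  ((P x /\ P'' x -> forall y, (T y /\ GH mul T x y) <-> GH mul (full S) x y) /\
   (~ (P x /\ P'' x) -> forall y, (T y /\ GH mul T x y) <-> y = x)) /\
  (* (iv) *)
  ((P x /\ P'' x -> forall y,
      (T y /\ GD mul T x y) <-> (GD mul (full S) x y /\ P y /\ P'' y)) /\
   (~ P x -> forall y, (T y /\ GD mul T x y) <-> (T y /\ GR mul T x y)) /\
   (~ P'' x -> forall y, (T y /\ GD mul T x y) <-> (T y /\ GL mul T x y))) /\
  (* (v) *)
  ((P' x /\ P''' x -> forall y,
      (T y /\ GJ mul T x y) <-> (GJ mul (full S) x y /\ P' y /\ P''' y)) /\
   (~ (P' x /\ P''' x) -> forall y, (T y /\ GJ mul T x y) <-> (T y /\ GD mul T x y))).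
Proof.
  cbv zeta; intros x Tx.
  pose proof (Sa_lmul assoc (a := a)) as T_lmul.
  assert (Px : PP mul a x <-> in_Tx mul (Sa mul a) x) by (rewrite PP_iff; tauto).
  rewrite Px.
  setoid_rewrite (PP_iff assoc).
  setoid_rewrite (PP''_iff assoc).
  setoid_rewrite (PP'_PP'''_iff assoc).
  split; [split|split; [split|split; [split|split; [split; [|split]|split]]]].
  - apply (L_class_in assoc T_lmul).
  - apply (L_class_out assoc T_lmul Tx).
  - apply (R_class_in assoc T_lmul).
  - apply (R_class_out assoc T_lmul Tx).
  - intros [Hx Hx']; apply (H_class_in assoc T_lmul Hx Hx').
  - apply (H_class_out assoc T_lmul Tx).
  - intros [Hx Hx']; apply (D_class_in assoc T_lmul Hx Hx').
  - apply (D_class_out_l assoc T_lmul Tx).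
  - apply (D_class_out_r assoc T_lmul).
  - apply (J_class_in assoc T_lmul).
  - apply (J_class_out assoc T_lmul Tx).
Qed.
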